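(* Let $X$ be a completely subscalable nonnegative random variable with survival function $\overline{F}(x) = \mathbb{P}(X>x)$. Then $\overline{F}$ is continuous on $(0, \infty)$.
   Context: A nonnegative random variable $X$ with survival function $\overline{F}$ is called completely subscalable if $\theta \, \overline{F}(x) \leq \overline{F}(x/\theta)$ for all $x \geq 0$ and all $\theta \in (0,1)$. *)

From HB Require Import structures.
From mathcomp Require Import all_boot all_order all_algebra.
From mathcomp Require Import all_classical all_reals all_analysis.
Set Implicit Arguments. Unset Strict Implicit. Unset Printing Implicit Defensive.
Import Order.TTheory GRing.Theory Num.Theory.
Local Open Scope ring_scope.

(* Survival function  Fbar(x) = P(X > x), real-valued (ccdf is finite). *)
Definition survival d (T : measurableType d) (R : realType)
  (P : probability T R) (X : {RV P >-> R}) (x : R) : R := fine (ccdf X x).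

Definition completely_subscalable d (T : measurableType d) (R : realType)
  (P : probability T R) (X : {RV P >-> R}) : Prop :=
  forall (x theta : R), 0 <= x -> 0 < theta -> theta < 1 ->
    theta * survival X x <= survival X (x / theta).

From HB Require Import structures.
From mathcomp Require Import all_boot all_order all_algebra.
From mathcomp Require Import all_classical all_reals all_analysis.
From mathcomp Require Import lra.
Import Order.TTheory GRing.Theory Num.Theory.
Import numFieldTopology.Exports numFieldNormedType.Exports.
Local Open Scope ring_scope.

(** Taking [theta = x / y] in the definition shows that [x * Fbar x] is
    nondecreasing on [(0, oo)], while [Fbar] itself is nonincreasing.  So for
    [0 < x <= y] we get [0 <= Fbar x - Fbar y <= (y - x) / x * Fbar y], hence
    [Fbar] is locally Lipschitz on [(0, oo)]. *)

Section NonincreasingScaledNondecreasing.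
Variables (R : realFieldType) (f : R -> R).
Hypothesis f_le1 : forall x, f x <= 1.
Hypothesis f_nonincreasing : {homo f : x y /~ x <= y}.
Hypothesis mulf_nondecreasing : forall x y, 0 < x -> x <= y -> x * f x <= y * f y.

Lemma distf_le_sorted x y : 0 < x -> x <= y -> `|f x - f y| <= (y - x) / x.
Proof.
move=> x_gt0 xy; have fyx := f_nonincreasing _ _ xy.
have mulf_xy := mulf_nondecreasing _ _ x_gt0 xy.
rewrite ger0_norm ?subr_ge0 // ler_pdivlMr //.
have : (y - x) * f y <= y - x by rewrite ler_piMr ?subr_ge0.
lra.
Qed.

Lemma distf_le x y : 0 < x -> 0 < y -> `|f x - f y| <= `|x - y| / Num.min x y.
Proof.
wlog xy : x y / x <= y => [hwlog x_gt0 y_gt0|x_gt0 _].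
  have /orP[xy|yx] := le_total x y; first exact: hwlog.
  by rewrite distrC [`|x - y|]distrC minC hwlog.
rewrite [`|x - y|]distrC [`|y - x|]ger0_norm ?subr_ge0 // (min_idPl xy).
exact: distf_le_sorted.
Qed.

Lemma continuous_pos x : 0 < x -> {for x, continuous f}.
Proof.
move=> x_gt0; apply/cvgrPdist_le => e e_gt0.
have delta_gt0 : 0 < Num.min (x / 2) (e * x / 2).
  by rewrite lt_min; apply/andP; split; [lra | nra].
exists (Num.min (x / 2) (e * x / 2)) => //= y /=.
rewrite lt_min => /andP[xy_small xy_e].
have [y_gt0 min_ge] : 0 < y /\ x / 2 <= Num.min x y.
  by move: xy_small; rewrite ltr_norml le_min => /andP[? ?]; split; lra.
have min_gt0 : 0 < Num.min x y by rewrite lt_min x_gt0.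
apply: le_trans (distf_le _ _ x_gt0 y_gt0) _.
rewrite ler_pdivrMr // (le_trans (ltW xy_e)) //.
by rewrite -mulrA ler_pM2l.
Qed.

End NonincreasingScaledNondecreasing.

Section Survival.
Context {d} {T : measurableType d} {R : realType} {P : probability T R}.
Variable X : {RV P >-> R}.

Lemma survival_le1 x : survival X x <= 1.
Proof.
rewrite /survival /ccdf -lee_fin fineK ?fin_num_measure //.
exact: probability_le1.
Qed.

Lemma survival_nonincreasing x y : x <= y -> survival X y <= survival X x.
Proof.
move=> xy; apply: fine_le; rewrite ?fin_num_measure //.
exact: ccdf_nonincreasing.
Qed.

Lemma subscalable_mul_survival x y : completely_subscalable X ->
  0 < x -> x <= y -> x * survival X x <= y * survival X y.
Proof.
move=> subscal x_gt0; rewrite le_eqVlt => /predU1P[-> //|xy].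
have y_gt0 : 0 < y by rewrite (lt_trans x_gt0).
have := subscal x (x / y) (ltW x_gt0) (divr_gt0 x_gt0 y_gt0).
have -> : x / (x / y) = y by rewrite invf_div mulrC divfK ?gt_eqF.
rewrite ltr_pdivrMr // mul1r => /(_ xy) le_scaled.
by rewrite -(ler_pM2l y_gt0) mulrA [y * _]mulrC divfK ?gt_eqF in le_scaled.
Qed.

End Survival.

Theorem lemma7 (d : measure_display) (T : measurableType d) (R : realType)
  (P : probability T R) (X : {RV P >-> R}) :
  (forall w, 0 <= X w) ->
  completely_subscalable X ->
  forall x : R, 0 < x -> {for x, continuous (survival X)}.
Proof.
move=> _ subscal; apply: continuous_pos.
- exact: survival_le1.
- by move=> x y; exact: survival_nonincreasing.
- by move=> x y; exact: (subscalable_mul_survival X x y subscal).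
Qed.
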